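(* Let $\mathcal{S}_m\subset\mathcal{S}_n\subset\mathcal{T}$ be nested subsets of the training set with $|\mathcal{S}_m|=m<n=|\mathcal{S}_n|$, let $L_m,L_n$ be the corresponding empirical losses and $R_m,R_n$ the corresponding regularized empirical risks, with minimizers $\mathbf{w}_m^*,\mathbf{w}_n^*$. Let $\mathbf{w}_m$ be a (possibly random) vector such that $\mathbb{E}[R_m(\mathbf{w}_m)-R_m(\mathbf{w}_m^* )]\le \delta_m$. Then $$\mathbb{E}[R_n(\mathbf{w}_m)-R_n(\mathbf{w}_n^* )]\le \delta_m+\frac{2(n-m)}{n}\left(V_{n-m}+V_m\right)+2\left(V_m-V_n\right)+\frac{c(V_m-V_n)}{2}\|\mathbf{w}^*\|^2 .$$
   Context: Let $Z$ be a random variable with distribution $P$ on a space $\mathcal{Z}$ and $f:\mathbb{R}^p\times\mathcal{Z}\to\mathbb{R}$ a loss function. The expected loss is $L(\mathbf{w})=\mathbb{E}_Z[f(\mathbf{w},Z)]$ and $\mathbf{w}^*$ denotes a minimizer of $L$. The training set $\mathcal{T}=\{z_1,\dots,z_N\}$ consists of $N$ independent samples from $P$. For a (fixed, data-independent) subset $\mathcal{S}\subseteq\mathcal{T}$ with $k$ elements, the empirical loss is $L_{\mathcal{S}}(\mathbf{w})=\frac1k\sum_{z\in\mathcal{S}}f(\mathbf{w},z)$; for the sets $\mathcal{S}_k$ we write $L_k=L_{\mathcal{S}_k}$. Standing assumption: there are positive constants $V_k$ ($k\ge1$), nonincreasing in $k$, such that for every $k$ and every set $\mathcal{S}$ of $k$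 independent samples from $P$, $\mathbb{E}[\sup_{\mathbf{w}\in\mathbb{R}^p}|L(\mathbf{w})-L_{\mathcal{S}}(\mathbf{w})|]\le V_k$, where the expectation is over the samples. For a constant $c>0$ the regularized empirical risk is $R_k(\mathbf{w})=L_k(\mathbf{w})+\frac{cV_k}{2}\|\mathbf{w}\|^2$, with minimizer $\mathbf{w}_k^*$. Assumption: for every $z$, $f(\cdot,z)$ is convex and its gradient is $M$-Lipschitz continuous. Expectations in the claim are over the choice of the training samples (and any randomness in $\mathbf{w}_m$). *)

From HB Require Import structures.
From mathcomp Require Import all_boot all_order all_algebra.
From mathcomp Require Import all_classical all_reals all_analysis.
From mathcomp Require Import measurable_realfun.
Set Implicit Arguments. Unset Strict Implicit. Unset Printing Implicit Defensive.
Import Order.TTheory GRing.Theory Num.Theory.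
Import numFieldNormedType.Exports.
Local Open Scope classical_set_scope.
Local Open Scope ring_scope.

Section Defs.
Variable R : realType.

Definition dotv (p : nat) (u v : 'rV[R]_p) : R := \sum_(i < p) u 0 i * v 0 i.
Definition sqnorm (p : nat) (w : 'rV[R]_p) : R := dotv w w.
Definition norm2 (p : nat) (w : 'rV[R]_p) : R := Num.sqrt (sqnorm w).

Definition convex_fun (p : nat) (F : 'rV[R]_p -> R) : Prop :=
  forall (u v : 'rV[R]_p) (t : R), 0 <= t <= 1 ->
    F (t *: u + (1 - t) *: v) <= t * F u + (1 - t) * F v.

(* F is differentiable with gradient g (every directional derivative of F at w
   in direction v exists and equals <g w, v>), and g is M-Lipschitz for the
   Euclidean norm. *)
Definition lipschitz_gradient (p : nat) (M : R) (F : 'rV[R]_p -> R) : Prop :=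
  exists g : 'rV[R]_p -> 'rV[R]_p,
    (forall w v : 'rV[R]_p, is_derive w v F (dotv (g w) v)) /\
    (forall u v : 'rV[R]_p, norm2 (g u - g v) <= M * norm2 (u - v)).

Definition expect d (Omega : measurableType d) (P : probability Omega R)
  (X : Omega -> R) : \bar R := (\int[P]_om (X om)%:E)%E.

Definition has_distribution d (Omega : measurableType d) dZ (Z : measurableType dZ)
  (P : probability Omega R) (mu : probability Z R) (X : Omega -> Z) : Prop :=
  measurable_fun setT X /\
  forall A : set Z, measurable A -> P (X @^-1` A) = mu A.

Definition mutually_independent d (Omega : measurableType d) dZ (Z : measurableType dZ)
  (P : probability Omega R) (I : finType) (X : I -> Omega -> Z) : Prop :=
  forall (J : {set I}) (A : I -> set Z), (forall i, measurable (A i)) ->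
    P (\bigcap_(i in [set j | j \in J]) (X i @^-1` A i)) =
    (\prod_(i in J) P (X i @^-1` A i))%E.

Definition exp_loss dZ (Z : measurableType dZ) (mu : probability Z R) (p : nat)
  (f : 'rV[R]_p -> Z -> R) (w : 'rV[R]_p) : R :=
  fine (\int[mu]_x (f w x)%:E)%E.

Definition emp_loss dZ (Z : measurableType dZ) (p k : nat)
  (f : 'rV[R]_p -> Z -> R) (y : 'I_k -> Z) (w : 'rV[R]_p) : R :=
  k%:R^-1 * \sum_(i < k) f w (y i).

Definition emp_loss_set dZ (Z : measurableType dZ) (p N : nat)
  (f : 'rV[R]_p -> Z -> R) (z : 'I_N -> Z) (S : {set 'I_N}) (w : 'rV[R]_p) : R :=
  (#|S|%:R)^-1 * \sum_(i in S) f w (z i).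

Definition reg_risk dZ (Z : measurableType dZ) (p N : nat)
  (f : 'rV[R]_p -> Z -> R) (V : nat -> R) (c : R)
  (z : 'I_N -> Z) (S : {set 'I_N}) (w : 'rV[R]_p) : R :=
  emp_loss_set f z S w + c * V #|S| / 2 * sqnorm w.

Definition unif_dev dZ (Z : measurableType dZ) (mu : probability Z R) (p k : nat)
  (f : 'rV[R]_p -> Z -> R) (y : 'I_k -> Z) : \bar R :=
  ereal_sup (range (fun w : 'rV[R]_p => (`| exp_loss mu f w - emp_loss f y w |)%:E)).

End Defs.

From HB Require Import structures.
From mathcomp Require Import all_boot all_order all_algebra.
From mathcomp Require Import all_classical all_reals all_analysis.
From mathcomp Require Import measurable_realfun.
From mathcomp Require Import ring lra.
Import Order.TTheory GRing.Theory Num.Theory.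
Import numFieldNormedType.Exports.
Set Implicit Arguments. Unset Strict Implicit. Unset Printing Implicit Defensive.
Local Open Scope classical_set_scope.
Local Open Scope ring_scope.

(** Split [R_n(w_m) - R_n(w_n^* )] as [R_m(w_m) - R_m(w_m^* )], plus
    [R_m(w_m^* ) - R_m(w_n^* ) <= 0], plus the two gaps [R_n - R_m] at [w_m]
    and at [w_n^*]. As [n L_n = m L_m + (n - m) L_d], where [L_d] is the
    empirical loss of [S_d = S_n \ S_m], each gap is [(n - m)/n] times
    [L_d - L_m] up to a penalty term; [L_d - L_m] passes through the population
    loss [L] at the cost of the uniform deviations of the samples [S_d] and
    [S_m]; at [w_n^*] there is also the penalty gap
    [c (V_m - V_n)/2 |w_n^*|^2 = (V_m - V_n)/V_n * c V_n/2 |w_n^*|^2], and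
    comparing [R_n(w_n^* )] with [R_n(w^* )], where [w^*] minimizes [L], bounds
    [c V_n/2 |w_n^*|^2] by twice the uniform deviation of [S_n] plus
    [c V_n/2 |w^*|^2].  In expectation the uniform deviation of [k] independent
    samples is at most [V_k]. *)

Lemma subr_le_dist (R : realDomainType) (l x y : R) : x - y <= `|l - x| + `|l - y|.
Proof.
rewrite (_ : x - y = (l - y) - (l - x)); last by ring.
rewrite [X in _ <= X]addrC; exact: le_trans (ler_norm _) (ler_normB _ _).
Qed.

Lemma sqnorm_ge0 (R : realType) (p : nat) (w : 'rV[R]_p) : 0 <= sqnorm w.
Proof. by apply: sumr_ge0 => i _; rewrite -expr2 sqr_ge0. Qed.

Section EmpiricalRisk.
Variables (R : realType) (dZ : measure_display) (Z : measurableType dZ).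
Variables (p N : nat) (f : 'rV[R]_p -> Z -> R) (z : 'I_N -> Z).

Lemma card_mul_emp_loss_set (S : {set 'I_N}) w :
  #|S|%:R * emp_loss_set f z S w = \sum_(i in S) f w (z i).
Proof.
have [S0|S0] := eqVneq #|S| 0%N.
  by rewrite S0 mul0r (cards0_eq S0) big_set0.
by rewrite /emp_loss_set mulrA mulfV ?mul1r // pnatr_eq0.
Qed.

Lemma emp_loss_set_subsetB (Sm Sn : {set 'I_N}) w :
  Sm \subset Sn -> (0 < #|Sn|)%N ->
  emp_loss_set f z Sn w - emp_loss_set f z Sm w =
  #|Sn :\: Sm|%:R / #|Sn|%:R *
    (emp_loss_set f z (Sn :\: Sm) w - emp_loss_set f z Sm w).
Proof.
move=> sub_mn n_gt0; have SnSm : Sn :&: Sm = Sm by apply/finset.setIidPr.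
have card_n : #|Sn|%:R = #|Sm|%:R + #|Sn :\: Sm|%:R :> R.
  by rewrite cardsD SnSm -natrD subnKC // subset_leq_card.
have n_neq0 : #|Sn|%:R != 0 :> R by rewrite pnatr_eq0 -lt0n.
apply: (mulfI n_neq0); rewrite mulrA mulrCA divff // mulr1 mulrBr.
rewrite card_mul_emp_loss_set (big_setID Sm) /= SnSm -!card_mul_emp_loss_set.
by rewrite card_n; ring.
Qed.

Variables (V : nat -> R) (c : R) (L : 'rV[R]_p -> R).

Lemma reg_risk_subsetB (Sm Sn : {set 'I_N}) w :
  Sm \subset Sn -> (0 < #|Sn|)%N ->
  reg_risk f V c z Sn w - reg_risk f V c z Sm w =
  #|Sn :\: Sm|%:R / #|Sn|%:R *
    (emp_loss_set f z (Sn :\: Sm) w - emp_loss_set f z Sm w)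
  - c * (V #|Sm| - V #|Sn|) / 2 * sqnorm w.
Proof.
move=> sub_mn n_gt0; rewrite -emp_loss_set_subsetB // /reg_risk; ring.
Qed.

Lemma reg_penalty_minimizer_le (S : {set 'I_N}) wS ws :
  (forall w, reg_risk f V c z S wS <= reg_risk f V c z S w) ->
  (forall w, L ws <= L w) ->
  c * V #|S| / 2 * sqnorm wS <=
  `|L wS - emp_loss_set f z S wS| + `|L ws - emp_loss_set f z S ws|
  + c * V #|S| / 2 * sqnorm ws.
Proof.
move=> /(_ ws) + /(_ wS); rewrite /reg_risk => min_wS min_ws.
have := ler_norm (emp_loss_set f z S ws - L ws); rewrite distrC.
have := ler_norm (L wS - emp_loss_set f z S wS).
lra.
Qed.

Local Notation dev S w := `|L w - emp_loss_set f z S w|.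

Section NestedSubsets.
Variables (Sm Sn : {set 'I_N}).
Hypotheses (c_gt0 : 0 < c) (sub_mn : Sm \subset Sn) (n_gt0 : (0 < #|Sn|)%N).
Hypotheses (Vn_gt0 : 0 < V #|Sn|) (V_le : V #|Sn| <= V #|Sm|).

Lemma reg_risk_excess_subset_le w wm wn ws :
  (forall w, reg_risk f V c z Sm wm <= reg_risk f V c z Sm w) ->
  (forall w, reg_risk f V c z Sn wn <= reg_risk f V c z Sn w) ->
  (forall w, L ws <= L w) ->
  reg_risk f V c z Sn w - reg_risk f V c z Sn wn <=
  (reg_risk f V c z Sm w - reg_risk f V c z Sm wm)
  + #|Sn :\: Sm|%:R / #|Sn|%:R * (dev (Sn :\: Sm) w + dev (Sn :\: Sm) wn)
  + #|Sn :\: Sm|%:R / #|Sn|%:R * (dev Sm w + dev Sm wn)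
  + (V #|Sm| - V #|Sn|) / V #|Sn| * (dev Sn wn + dev Sn ws)
  + c * (V #|Sm| - V #|Sn|) / 2 * sqnorm ws.
Proof.
move=> min_m min_n min_L.
have := reg_risk_subsetB w sub_mn n_gt0; have := reg_risk_subsetB wn sub_mn n_gt0.
have := min_m wn.
set a := _ / _; set e := _ / V #|Sn|; set Sd := Sn :\: Sm.
have a_ge0 : 0 <= a by rewrite divr_ge0.
have e_ge0 : 0 <= e by rewrite divr_ge0 ?subr_ge0 // ltW.
have /(ler_wpM2l a_ge0) dev_w := subr_le_dist (L w) (emp_loss_set f z Sd w)
  (emp_loss_set f z Sm w).
have /(ler_wpM2l a_ge0) dev_wn := subr_le_dist (L wn) (emp_loss_set f z Sm wn)
  (emp_loss_set f z Sd wn).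
have /(ler_wpM2l e_ge0) pen_wn := reg_penalty_minimizer_le min_n min_L.
have pen_e v : c * (V #|Sm| - V #|Sn|) / 2 * sqnorm v
    = e * (c * V #|Sn| / 2 * sqnorm v).
  by rewrite /e; field; rewrite lt0r_neq0.
have pen_w : 0 <= c * (V #|Sm| - V #|Sn|) / 2 * sqnorm w.
  by rewrite !mulr_ge0 ?sqnorm_ge0 ?invr_ge0 ?subr_ge0 // ltW.
rewrite !pen_e in pen_w *.
lra.
Qed.

End NestedSubsets.

End EmpiricalRisk.

Lemma mutually_independent_comp (R : realType) d (Omega : measurableType d)
    (P : probability Omega R) dZ (Z : measurableType dZ) (I J : finType)
    (X : I -> Omega -> Z) (h : J -> I) :
  injective h -> mutually_independent P X ->
  mutually_independent P (fun j => X (h j)).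
Proof.
move=> h_inj indep_X K A mA.
pose A' i := if [pick j | h j == i] is Some j then A j else setT.
have A'E j : A' (h j) = A j.
  by rewrite /A'; case: pickP => [j' /eqP/h_inj -> //|/(_ j)]; rewrite eqxx.
have mA' i : measurable (A' i).
  by rewrite /A'; case: pickP => [j _|_]; [exact: mA | exact: measurableT].
have := indep_X (h @: K)%SET A' mA'.
rewrite big_imset /=; last by move=> j1 j2 _ _; exact: h_inj.
under [X in _ = X -> _]eq_bigr do rewrite A'E.
move=> <-; congr (P _); apply/seteqP; split=> om /= Hom.
- by move=> _ /= /imsetP [j jK ->]; rewrite A'E; exact: Hom.
- by move=> j /= jK; rewrite -A'E; apply: Hom; apply/imsetP; exists j.
Qed.

Lemma EFin_mulD_le_ub (R : realDomainType) (a x y : R) (D : \bar R) :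
  0 <= a -> (x%:E <= D)%E -> (y%:E <= D)%E -> ((a * (x + y))%:E <= (2 * a)%:E * D)%E.
Proof.
move=> a_ge0; case: D => [r| |] //.
- rewrite -EFinM !lee_fin => xr yr.
  have /(ler_wpM2l a_ge0) : x + y <= 2 * r by lra.
  lra.
- move=> _ _; have [->|a_neq0] := eqVneq a 0; first by rewrite !(mul0r, mulr0) mul0e.
  by rewrite gt0_muley ?leey // lte_fin mulr_gt0 // lt_def a_neq0.
Qed.

Section NonnegIntegralBound.
Variables (R : realType) (d : measure_display) (T : measurableType d).
Variable (P : probability T R).
Local Open Scope ereal_scope.

Definition nneg_integral_le (g : T -> \bar R) (b : R) :=
  [/\ measurable_fun setT g, forall x, 0 <= g x & \int[P]_x g x <= b%:E].

Lemma nneg_integral_leD g h a b :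
  nneg_integral_le g a -> nneg_integral_le h b ->
  nneg_integral_le (fun x => g x + h x) (a + b).
Proof.
move=> [mg g_ge0 ga] [mh h_ge0 hb]; split.
- exact: emeasurable_funD.
- by move=> x; rewrite adde_ge0.
- by rewrite ge0_integralD // EFinD; exact: leeD.
Qed.

Lemma nneg_integral_leZl (k : R) g b : (0 <= k)%R ->
  nneg_integral_le g b -> nneg_integral_le (fun x => k%:E * g x) (k * b).
Proof.
move=> k_ge0 [mg g_ge0 gb]; split.
- exact: measurable_funeM.
- by move=> x; rewrite mule_ge0.
- by rewrite ge0_integralZl_EFin // EFinM; exact: lee_wpmul2l.
Qed.

Lemma nneg_integral_le_cst (k : R) : (0 <= k)%R -> nneg_integral_le (fun=> k%:E) k.
Proof.
move=> k_ge0; split => //.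
rewrite integral_cst // -[leRHS]mule1 le_eqVlt; apply/orP; left; apply/eqP.
by congr (_ * _); exact: probability_setT.
Qed.

Lemma nneg_integral_le_le (X g : T -> \bar R) b :
  measurable_fun setT X -> (forall x, 0 <= X x) -> (forall x, X x <= g x) ->
  nneg_integral_le g b -> \int[P]_x X x <= b%:E.
Proof.
move=> mX X_ge0 Xg [mg _ gb].
exact: le_trans (ge0_le_integral P measurableT (fun x _ => X_ge0 x) mX mg
  (fun x _ => Xg x)) gb.
Qed.

End NonnegIntegralBound.

Section UniformDeviation.
Variables (R : realType) (dZ : measure_display) (Z : measurableType dZ).
Variables (mu : probability Z R) (p : nat) (f : 'rV[R]_p -> Z -> R).

Lemma unif_dev_ge k (y : 'I_k -> Z) w :
  ((`| exp_loss mu f w - emp_loss f y w |)%:E <= unif_dev mu f y)%E.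
Proof. by apply: ereal_sup_ubound; exists w. Qed.

Lemma unif_dev_ge0 k (y : 'I_k -> Z) : (0 <= unif_dev mu f y)%E.
Proof. exact: le_trans (unif_dev_ge y 0). Qed.

Definition unif_dev_set N (z : 'I_N -> Z) (S : {set 'I_N}) : \bar R :=
  unif_dev mu f (fun i : 'I_#|S| => z (enum_val i)).

Lemma unif_dev_set_ge N (z : 'I_N -> Z) (S : {set 'I_N}) w :
  ((`| exp_loss mu f w - emp_loss_set f z S w |)%:E <= unif_dev_set z S)%E.
Proof.
have -> : emp_loss_set f z S w = emp_loss f (fun i : 'I_#|S| => z (enum_val i)) w.
  by rewrite /emp_loss /emp_loss_set (big_enum_val (A:=mem S)).
exact: unif_dev_ge.
Qed.

Variables (V : nat -> R) (c : R) (N : nat) (z : 'I_N -> Z) (Sm Sn : {set 'I_N}).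
Hypotheses (c_gt0 : 0 < c) (sub_mn : Sm \subset Sn) (n_gt0 : (0 < #|Sn|)%N).
Hypotheses (Vn_gt0 : 0 < V #|Sn|) (V_le : V #|Sn| <= V #|Sm|).

Lemma reg_risk_excess_le_unif_dev w wm wn ws :
  (forall w, reg_risk f V c z Sm wm <= reg_risk f V c z Sm w) ->
  (forall w, reg_risk f V c z Sn wn <= reg_risk f V c z Sn w) ->
  (forall w, exp_loss mu f ws <= exp_loss mu f w) ->
  ((reg_risk f V c z Sn w - reg_risk f V c z Sn wn)%:E <=
   (reg_risk f V c z Sm w - reg_risk f V c z Sm wm)%:E
   + (2 * (#|Sn :\: Sm|%:R / #|Sn|%:R))%:E * unif_dev_set z (Sn :\: Sm)
   + (2 * (#|Sn :\: Sm|%:R / #|Sn|%:R))%:E * unif_dev_set z Sm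
   + (2 * ((V #|Sm| - V #|Sn|) / V #|Sn|))%:E * unif_dev_set z Sn
   + (c * (V #|Sm| - V #|Sn|) / 2 * sqnorm ws)%:E)%E.
Proof.
move=> min_m min_n min_L.
have a_ge0 : 0 <= #|Sn :\: Sm|%:R / #|Sn|%:R :> R by rewrite divr_ge0.
have e_ge0 : 0 <= (V #|Sm| - V #|Sn|) / V #|Sn| by rewrite divr_ge0 ?subr_ge0 // ltW.
have := reg_risk_excess_subset_le c_gt0 sub_mn n_gt0 Vn_gt0 V_le w min_m min_n min_L.
rewrite -lee_fin => /le_trans; apply.
by rewrite !EFinD; repeat apply: leeD => //; apply: EFin_mulD_le_ub => //;
  exact: unif_dev_set_ge.
Qed.

End UniformDeviation.

Section ExpectedExcessRisk.
Variables (R : realType) (d : measure_display) (Omega : measurableType d).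
Variables (P : probability Omega R) (dZ : measure_display) (Z : measurableType dZ).
Variables (mu : probability Z R) (p : nat) (f : 'rV[R]_p -> Z -> R) (V : nat -> R).
Hypothesis hV : forall (k : nat) (y : 'I_k -> Omega -> Z), (0 < k)%N ->
  (forall i, has_distribution P mu (y i)) -> mutually_independent P y ->
  measurable_fun setT ((fun om => unif_dev mu f (fun i => y i om)) : Omega -> \bar R) /\
  (\int[P]_om unif_dev mu f (fun i => y i om) <= (V k)%:E)%E.
Variables (N : nat) (z : 'I_N -> Omega -> Z).
Hypothesis hz_dist : forall i, has_distribution P mu (z i).
Hypothesis hz_indep : mutually_independent P z.

Local Notation sample om := (fun i => z i om).

Lemma unif_dev_set_integral_le (S : {set 'I_N}) : (0 < #|S|)%N ->
  nneg_integral_le P (fun om => unif_dev_set mu f (sample om) S) (V #|S|).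
Proof.
move=> S_gt0; have [meas_dev int_dev] := hV S_gt0 (fun i => hz_dist _)
  (mutually_independent_comp enum_val_inj hz_indep).
by split=> // om; exact: unif_dev_ge0.
Qed.

Variables (c : R) (Sm Sn : {set 'I_N}) (wm wmstar wnstar : Omega -> 'rV[R]_p).
Variables (ws : 'rV[R]_p) (delta : R).
Hypotheses (c_gt0 : 0 < c) (sub_mn : Sm \subset Sn).
Hypotheses (m_gt0 : (0 < #|Sm|)%N) (mn : (#|Sm| < #|Sn|)%N).
Hypotheses (Vn_gt0 : 0 < V #|Sn|) (V_le : V #|Sn| <= V #|Sm|).
Hypothesis min_ws : forall w, exp_loss mu f ws <= exp_loss mu f w.

Local Notation excess S w w' :=
  (fun om => reg_risk f V c (sample om) S (w om) - reg_risk f V c (sample om) S (w' om)).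

Hypothesis min_m : forall om w,
  reg_risk f V c (sample om) Sm (wmstar om) <= reg_risk f V c (sample om) Sm w.
Hypothesis min_n : forall om w,
  reg_risk f V c (sample om) Sn (wnstar om) <= reg_risk f V c (sample om) Sn w.
Hypothesis meas_m : measurable_fun setT (excess Sm wm wmstar).
Hypothesis meas_n : measurable_fun setT (excess Sn wm wnstar).
Hypothesis excess_m_le : (expect P (excess Sm wm wmstar) <= delta%:E)%E.

Lemma expect_reg_risk_excess_le :
  (expect P (excess Sn wm wnstar) <=
   (delta + 2 * #|Sn :\: Sm|%:R / #|Sn|%:R * (V #|Sn :\: Sm| + V #|Sm|)
    + 2 * (V #|Sm| - V #|Sn|) + c * (V #|Sm| - V #|Sn|) / 2 * sqnorm ws)%:E)%E.
Proof.
set Sd := Sn :\: Sm.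
have n_gt0 : (0 < #|Sn|)%N := leq_ltn_trans (leq0n _) mn.
have d_gt0 : (0 < #|Sd|)%N.
  by rewrite cardsD (finset.setIidPr sub_mn) subn_gt0.
have excess_m : nneg_integral_le P (fun om => (excess Sm wm wmstar om)%:E) delta.
  split=> //; first exact/measurable_EFinP.
  by move=> om; rewrite lee_fin subr_ge0.
pose a : R := #|Sd|%:R / #|Sn|%:R; pose e := (V #|Sm| - V #|Sn|) / V #|Sn|.
have a2_ge0 : 0 <= 2 * a by rewrite mulr_ge0 ?divr_ge0.
have e2_ge0 : 0 <= 2 * e by rewrite mulr_ge0 ?divr_ge0 ?subr_ge0 // ltW.
have K_ge0 : 0 <= c * (V #|Sm| - V #|Sn|) / 2 * sqnorm ws.
  by rewrite !mulr_ge0 ?sqnorm_ge0 ?invr_ge0 ?subr_ge0 // ltW.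
have dev_le := unif_dev_set_integral_le.
have bound := nneg_integral_leD (nneg_integral_leD (nneg_integral_leD
  (nneg_integral_leD excess_m (nneg_integral_leZl a2_ge0 (dev_le Sd d_gt0)))
  (nneg_integral_leZl a2_ge0 (dev_le Sm m_gt0)))
  (nneg_integral_leZl e2_ge0 (dev_le Sn n_gt0))) (nneg_integral_le_cst P K_ge0).
apply: le_trans (nneg_integral_le_le _ _ _ bound) _.
- exact/measurable_EFinP.
- by move=> om; rewrite lee_fin subr_ge0.
- by move=> om; apply: reg_risk_excess_le_unif_dev.
rewrite lee_fin /a /e le_eqVlt; apply/predU1P; left.
by field; rewrite pnatr_eq0 -lt0n n_gt0 lt0r_neq0.
Qed.

End ExpectedExcessRisk.

Theorem proposition1
  (R : realType)
  (d : measure_display) (Omega : measurableType d) (P : probability Omega R)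
  (dZ : measure_display) (Z : measurableType dZ) (mu : probability Z R)
  (p : nat) (f : 'rV[R]_p -> Z -> R) (M : R)
  (V : nat -> R) (c : R) (N : nat) (z : 'I_N -> Omega -> Z)
  (wstar : 'rV[R]_p)
  (Sm Sn : {set 'I_N}) (m n : nat)
  (wm wmstar wnstar : Omega -> 'rV[R]_p) (delta_m : R)
  (* the loss: measurable and integrable in z, convex with M-Lipschitz gradient in w *)
  (hf_meas : forall w, measurable_fun setT (f w))
  (hf_int : forall w, mu.-integrable setT (fun x => (f w x)%:E))
  (hf_convex : forall x, convex_fun (fun w => f w x))
  (hf_grad : forall x, lipschitz_gradient M (fun w => f w x))
  (* w* minimizes the expected loss L *)
  (hwstar : forall w, exp_loss mu f wstar <= exp_loss mu f w)
  (* standing assumption on V *)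
  (hV_pos : forall k, (0 < k)%N -> 0 < V k)
  (hV_noninc : forall k l, (0 < k)%N -> (k <= l)%N -> V l <= V k)
  (hV : forall (k : nat) (y : 'I_k -> Omega -> Z), (0 < k)%N ->
        (forall i, has_distribution P mu (y i)) -> mutually_independent P y ->
        measurable_fun setT ((fun om => unif_dev mu f (fun i => y i om)) : Omega -> \bar R) /\
        (\int[P]_om unif_dev mu f (fun i => y i om) <= (V k)%:E)%E)
  (hc : 0 < c)
  (* training set: N independent samples distributed according to mu *)
  (hz_dist : forall i, has_distribution P mu (z i))
  (hz_indep : mutually_independent P z)
  (* nested subsets of the training set *)
  (hSmSn : Sm \subset Sn) (hm : #|Sm| = m) (hn : #|Sn| = n)
  (hm0 : (0 < m)%N) (hmn : (m < n)%N)
  (* minimizers of the regularized empirical risks R_m, R_n *)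
  (hwmstar : forall om w, reg_risk f V c (fun i => z i om) Sm (wmstar om)
                          <= reg_risk f V c (fun i => z i om) Sm w)
  (hwnstar : forall om w, reg_risk f V c (fun i => z i om) Sn (wnstar om)
                          <= reg_risk f V c (fun i => z i om) Sn w)
  (* the expectations involved are well defined *)
  (hmeas_m : measurable_fun setT (fun om =>
      reg_risk f V c (fun i => z i om) Sm (wm om)
      - reg_risk f V c (fun i => z i om) Sm (wmstar om)))
  (hmeas_n : measurable_fun setT (fun om =>
      reg_risk f V c (fun i => z i om) Sn (wm om)
      - reg_risk f V c (fun i => z i om) Sn (wnstar om)))
  (* w_m is a delta_m-approximate minimizer of R_m in expectation *)
  (hdelta : (expect P (fun om =>
      (reg_risk f V c (fun i => z i om) Sm (wm om)
      - reg_risk f V c (fun i => z i om) Sm (wmstar om))%R) <= delta_m%:E)%E) :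
  (expect P (fun om =>
      (reg_risk f V c (fun i => z i om) Sn (wm om)
      - reg_risk f V c (fun i => z i om) Sn (wnstar om))%R)
   <= (delta_m + 2 * (n - m)%N%:R / n%:R * (V (n - m)%N + V m)
       + 2 * (V m - V n) + c * (V m - V n) / 2 * sqnorm wstar)%R%:E)%E.
Proof.
have m_gt0 : (0 < #|Sm|)%N by rewrite hm.
have mn : (#|Sm| < #|Sn|)%N by rewrite hm hn.
have Vn_gt0 : 0 < V #|Sn| by rewrite hn hV_pos // (ltn_trans hm0 hmn).
have V_le : V #|Sn| <= V #|Sm| by rewrite hm hn hV_noninc // ltnW.
have card_d : #|Sn :\: Sm| = (n - m)%N by rewrite cardsD (finset.setIidPr hSmSn) hm hn.
have := expect_reg_risk_excess_le hV hz_dist hz_indep hc hSmSn m_gt0 mn Vn_gt0 V_le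
  hwstar hwmstar hwnstar hmeas_m hmeas_n hdelta.
by rewrite card_d hm hn.
Qed.
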